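(* Let $c>0$, $\Delta_1,\dots,\Delta_K\in(0,1]$ and $T\ge K$, let $\Psi_c\ge0$ be the unique solution $x\ge0$ of \[ \sum_{i=1}^K\Big(\mathbb{I}\{x\le\ln\Delta_i^{-1}\}e^{2x}+\mathbb{I}\{x>\ln\Delta_i^{-1}\}\frac{x-\ln\Delta_i^{-1}+c/2}{c\Delta_i^2/2}\Big)=T, \] and let $(x_1^*,\dots,x_K^* )$ be the optimal solution of $\mathscr{P}_c(\{\max\{\Delta_i,e^{-\Psi_c}\}\}_{i=1}^K,T)$ given by $x_i^*=\mathbb{I}\{\Psi_c\le\ln\Delta_i^{-1}\}e^{2\Psi_c}+\mathbb{I}\{\Psi_c>\ln\Delta_i^{-1}\}\frac{\Psi_c-\ln\Delta_i^{-1}+c/2}{c\Delta_i^2/2}$. Then \[ \sum_{i=1}^K\exp(-c x_i^*\Delta_i^2)\le e^{c}\,\mathscr{P}_c(\{\max\{\Delta_i,e^{-\Psi_c}\}\}_{i=1}^K,T). \]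
   Context: For $c>0$, $T\ge0$ and positive reals $D_1,\dots,D_K$, $\mathscr{P}_c(\{D_i\}_{i=1}^K,T)$ denotes the optimal value of: minimize $\sum_{i=1}^K\exp(-cx_iD_i^2)$ subject to $x_1+\dots+x_K=T$, $x_i\ge0$. *)

From mathcomp Require Import all_boot all_order all_algebra.
From mathcomp Require Import all_classical all_reals all_analysis.
Set Implicit Arguments. Unset Strict Implicit. Unset Printing Implicit Defensive.
Import Order.TTheory GRing.Theory Num.Theory.
Local Open Scope classical_set_scope.
Local Open Scope ring_scope.

Definition Pc_obj {R : realType} (K : nat) (c : R) (D x : 'I_K -> R) : R :=
  \sum_(i < K) expR (- (c * x i * D i ^+ 2)).

Definition Pc_feasible {R : realType} (K : nat) (T : R) : set ('I_K -> R) :=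
  [set x | (\sum_(i < K) x i = T) /\ (forall i, 0 <= x i)].

Definition Pc {R : realType} (K : nat) (c : R) (D : 'I_K -> R) (T : R) : R :=
  inf [set Pc_obj c D x | x in @Pc_feasible R K T].

Definition psi_term {R : realType} (c Di x : R) : R :=
  if x <= ln (Di^-1) then expR (2 * x)
  else (x - ln (Di^-1) + c / 2) / (c * Di ^+ 2 / 2).

From mathcomp Require Import all_boot all_order all_algebra.
From mathcomp Require Import all_classical all_reals all_analysis.
From mathcomp.algebra_tactics Require Import ring lra.
Import Order.TTheory GRing.Theory Num.Theory.
Local Open Scope classical_set_scope.
Local Open Scope ring_scope.

(* Write M_i = max(D_i, e^{-Psi}). The allocation x* satisfies
   c x_i* M_i^2 = c + 2 Psi + 2 ln M_i, so every summand of the objective of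
   P_c({M_i}, T) has the same derivative -c e^{-c-2 Psi} at x*: these are the
   KKT conditions, and by convexity of the exponential x* is optimal, i.e.
   P_c({M_i}, T) = sum_i e^{-c x_i* M_i^2}. Termwise, e^{-c x_i* D_i^2} is at
   most e^c e^{-c x_i* M_i^2}: either M_i = D_i, or M_i = e^{-Psi} and then
   c x_i* M_i^2 = c. *)

Lemma expR_tangent_le {R : realType} (a b : R) :
  expR a * (1 + (b - a)) <= expR b.
Proof.
have -> : expR b = expR a * expR (b - a) by rewrite -expRD; congr expR; ring.
by rewrite ler_wpM2l ?expR_ge1Dx // ltW // expR_gt0.
Qed.

Section OptimalityOfPc.
Context {R : realType} {K : nat} {c T : R} {M x : 'I_K -> R}.

Lemma Pc_eq_obj :
  Pc_feasible T x ->
  (forall y, Pc_feasible T y -> Pc_obj c M x <= Pc_obj c M y) ->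
  Pc c M T = Pc_obj c M x.
Proof.
move=> x_feas x_min; apply/le_anti/andP; split.
- by apply: ge_inf; [exists (Pc_obj c M x) => _ [y /x_min ? <-] | exists x].
- by apply: lb_le_inf; [exists (Pc_obj c M x), x | move=> _ [y /x_min ? <-]].
Qed.

Lemma Pc_obj_min_of_common_slope {lam : R} :
  \sum_(i < K) x i = T ->
  (forall i, c * M i ^+ 2 * expR (- (c * x i * M i ^+ 2)) = lam) ->
  forall y, Pc_feasible T y -> Pc_obj c M x <= Pc_obj c M y.
Proof.
move=> sum_x slope y [sum_y _].
have tangent i : expR (- (c * x i * M i ^+ 2)) - lam * (y i - x i)
                 <= expR (- (c * y i * M i ^+ 2)).
  apply: le_trans _ (expR_tangent_le (- (c * x i * M i ^+ 2)) _).
  by rewrite -(slope i) le_eqVlt; apply/orP; left; apply/eqP; ring.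
apply: le_trans _ (ler_sum _ (fun i _ => tangent i)).
by rewrite sumrB -mulr_sumr sumrB sum_x sum_y subrr mulr0 subr0.
Qed.

End OptimalityOfPc.

Section PsiTerm.
Variables (R : realType) (c D Psi : R).
Let M := Num.max D (expR (- Psi)).

Lemma psi_term_ge0 (c_gt0 : 0 < c) (D_gt0 : 0 < D) : 0 <= psi_term c D Psi.
Proof.
rewrite /psi_term; case: ifPn => [_|]; first exact/ltW/expR_gt0.
rewrite -ltNge => Psi_gt; apply: divr_ge0; first lra.
by rewrite ltW // !mulr_gt0 // exprn_gt0.
Qed.

Lemma psi_term_scaled (c_gt0 : 0 < c) (D_gt0 : 0 < D) :
  c * psi_term c D Psi * M ^+ 2 = c + 2 * Psi + 2 * ln M.
Proof.
rewrite /M /psi_term lnV ?posrE //; case: ifPn => Psi_le.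
- have D_le : D <= expR (- Psi) by rewrite -[D]lnK ?posrE // ler_expR; lra.
  rewrite max_r // expRK -mulrA -expRM_natl -expRD.
  have -> : 2 * Psi + 2%:R * - Psi = 0 by rewrite -[2%:R]/2; ring.
  by rewrite expR0; ring.
- have le_D : expR (- Psi) <= D by rewrite -[D]lnK ?posrE // ler_expR; lra.
  rewrite max_l //; field.
  by rewrite !gt_eqF.
Qed.

Lemma psi_term_slope (c_gt0 : 0 < c) (D_gt0 : 0 < D) :
  c * M ^+ 2 * expR (- (c * psi_term c D Psi * M ^+ 2)) = c * expR (- (c + 2 * Psi)).
Proof.
have M_gt0 : 0 < M by rewrite lt_max D_gt0.
rewrite psi_term_scaled // -mulrA; congr (_ * _).
rewrite -[M ^+ 2]lnK ?posrE ?exprn_gt0 // lnXn // -expRD; congr expR.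
by rewrite -[_ *+ 2]mulr_natl; ring.
Qed.

Lemma psi_term_excess (c_gt0 : 0 < c) (D_gt0 : 0 < D) :
  expR (- (c * psi_term c D Psi * D ^+ 2))
    <= expR c * expR (- (c * psi_term c D Psi * M ^+ 2)).
Proof.
rewrite -expRD ler_expR.
have [D_le|/ltW le_D] := leP D (expR (- Psi)); last first.
  by rewrite /M max_l //; lra.
have cxM : c * psi_term c D Psi * M ^+ 2 = c.
  by rewrite psi_term_scaled // /M max_r // expRK; ring.
rewrite cxM addrN oppr_le0.
by rewrite !mulr_ge0 ?sqr_ge0 ?psi_term_ge0 ?ltW.
Qed.

End PsiTerm.

Theorem lemma5 (R : realType) (K : nat) (c T Psi : R) (D : 'I_K -> R)
  (hc : 0 < c)
  (hD : forall i, 0 < D i /\ D i <= 1)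
  (hT : K%:R <= T)
  (hPsi0 : 0 <= Psi)
  (hPsi : \sum_(i < K) psi_term c (D i) Psi = T)
  (xstar : 'I_K -> R)
  (hxstar : forall i, xstar i = psi_term c (D i) Psi) :
  \sum_(i < K) expR (- (c * xstar i * D i ^+ 2))
    <= expR c * Pc c (fun i => Num.max (D i) (expR (- Psi))) T.
Proof.
pose M i := Num.max (D i) (expR (- Psi)).
have sum_xstar : \sum_(i < K) xstar i = T.
  by rewrite -hPsi; apply: eq_bigr => i _; rewrite hxstar.
have xstar_feas : Pc_feasible T xstar.
  by split=> // i; rewrite hxstar psi_term_ge0 ?(hD i).1.
have common_slope i :
    c * M i ^+ 2 * expR (- (c * xstar i * M i ^+ 2)) = c * expR (- (c + 2 * Psi)).
  by rewrite hxstar psi_term_slope ?(hD i).1.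
have xstar_opt := Pc_obj_min_of_common_slope sum_xstar common_slope.
rewrite (Pc_eq_obj xstar_feas xstar_opt) /Pc_obj mulr_sumr; apply: ler_sum => i _.
by rewrite hxstar psi_term_excess ?(hD i).1.
Qed.
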